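(* Let $X$ be the compact Kähler toric manifold with moment polytope the Delzant polytope $\Delta\subset\mathbb{R}^n$, $\Phi:X\to\Delta$ its moment map, $\nu$ its Liouville measure, and $L\to X$ its prequantum Hermitian holomorphic line bundle, as described in the context. For a lattice point $k\in\mathbb{Z}^n\cap\Delta$ and $N\in\mathbb{Z}_+$ let $s_{Nk}$ be a unit-norm holomorphic section of $L^{N}$ spanning the (one-dimensional) weight space of weight $Nk$, and let $\mu_{Nk}=\langle s_{Nk},s_{Nk}\rangle\,\nu$. Then for every $f\in C^\infty(\Delta)$, $$\int_X \Phi^*f\ d\mu_{Nk}\ \sim\ \Big(\sum_{i=0}^\infty P_i(x,D)f\ N^{-i}\Big)\Big|_{x=k}\qquad(N\to\infty),$$ where $P_i(x,D)$ are the differential operators (of order $2i$, $P_0=I$) described in the context.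
   Context: $\Delta=\{x\in\mathbb{R}^n:\ \ell_i(x)=c_i-\langle u_i,x\rangle\ge0,\ i=1,\dots,d\}$ is a compact $n$-dimensional Delzant polytope ($u_i$ primitive integer outward normals, $c_i\in\mathbb{Z}$, each vertex on exactly $n$ facets whose normals form a $\mathbb{Z}$-basis); $\ell_i$ is the lattice distance to the $i$-th facet. $X$ is obtained from $\Delta$ by the Delzant construction: the symplectic (Kähler) reduction of $\mathbb{C}^d$ with Kähler form $\sqrt{-1}\sum dz_i\wedge d\bar z_i$ by a codimension-$n$ subtorus $G$ of $T=(S^1)^d$ acting diagonally; $X$ carries the residual Hamiltonian action of the $n$-torus $K=T/G$ with moment map $\Phi$ (induced by $z\mapsto(|z_1|^2,\dots,|z_d|^2)$), with $\Phi(X)=\Delta$ and $\Phi_*\nu$ equal to Lebesgue measure on $\Delta$ (under the affine identification in which the $\ell_i$ are the coordinate functions $x_i$). $L$ is the reduction of the trivial line bundle over $\mathbb{C}^d$ with Hermitian metric $\langle s,s\rangle=e^{-|z|^2}$ for the constant section $s$; its curvature is minus the Kähler form. The space of holomorphic sections of $L^N$ splits into one-dimensional $K$-weight spaces indexed by the lattice points of $N\Delta$, and the unit section of weight $m$ satisfies $\langle s_m,s_m\rangle=\Phi^*\big(E_N(m/N,\cdot)\big)/\int_\Delta E_N(m/N,y)\,dy$, where $E_N(x,y)=\prod_i\ell_i(y)^{N\ell_i(x)}e^{-N\ell_i(y)}$ ($0^0=1$). The operators $P_i(x,D)$ are the differential operators on $C^\infty(\Delta)$, of order $2i$ with $P_0=I$,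 characterized by the asymptotic expansion $\int_\Delta K_N(x,y)f(y)\,dy\sim\sum_i (P_i(x,D)f)(x)N^{-i}$ for all $f\in C^\infty(\Delta)$, $x\in\Delta$, where $K_N(x,y)=E_N(x,y)/\int_\Delta E_N(x,y')\,dy'$. *)

From HB Require Import structures.
From mathcomp Require Import all_boot all_order all_algebra.
From mathcomp Require Import all_classical all_reals all_analysis.
Set Implicit Arguments. Unset Strict Implicit. Unset Printing Implicit Defensive.
Import Order.TTheory GRing.Theory Num.Theory.
Import numFieldNormedType.Exports.
Local Open Scope classical_set_scope.
Local Open Scope ring_scope.

Section Toric.
Variable R : realType.

(* u i j = j-th coordinate of the i-th (integer) normal, c i in Z. *)

Definition ell (n d : nat) (u : 'I_d -> 'I_n -> int) (c : 'I_d -> int)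
  (i : 'I_d) (x : 'rV[R]_n) : R :=
  (c i)%:~R - \sum_(j < n) (u i j)%:~R * x ord0 j.

Definition polytope (n d : nat) (u : 'I_d -> 'I_n -> int) (c : 'I_d -> int)
  : set 'rV[R]_n := [set x | forall i, 0 <= ell u c i x].

Definition is_vertex (n d : nat) (u : 'I_d -> 'I_n -> int) (c : 'I_d -> int)
  (v : 'rV[R]_n) : Prop :=
  polytope u c v /\
  ~ (exists a b, polytope u c a /\ polytope u c b /\ a <> b /\
        v = 2^-1 *: (a + b)).

Definition active (n d : nat) (u : 'I_d -> 'I_n -> int) (c : 'I_d -> int)
  (v : 'rV[R]_n) : {set 'I_d} := [set i | ell u c i v == 0].

Definition Zbasis (n d : nat) (u : 'I_d -> 'I_n -> int) (I : {set 'I_d}) : Prop :=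
  forall z : 'I_n -> int, exists! a : 'I_d -> int,
    (forall i, i \notin I -> a i = 0) /\
    forall j, z j = \sum_(i in I) a i * u i j.

Definition primitive (n : nat) (w : 'I_n -> int) : Prop :=
  forall m : int, (forall j, (m %| w j)%Z) -> `|m| = 1.

Definition Delzant (n d : nat) (u : 'I_d -> 'I_n -> int) (c : 'I_d -> int) : Prop :=
  [/\ (* compact (closed by definition, and bounded) *)
      exists M : R, forall x, polytope u c x -> forall j, `|x ord0 j| <= M,
      (* n-dimensional *)
      exists x : 'rV[R]_n, forall i, 0 < ell u c i x,
      (* each ell_i cuts out a facet (irredundant description) *)
      forall i, exists x : 'rV[R]_n,
        ell u c i x = 0 /\ forall j, j != i -> 0 < ell u c j x,
      forall i, primitive (u i) &
      forall v, is_vertex u c v ->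
        #|active u c v| = n /\ Zbasis u (active u c v)].

Fixpoint iint (n : nat) : ('rV[R]_n -> R) -> R :=
  match n return ('rV[R]_n -> R) -> R with
  | 0 => fun g => g 0
  | n'.+1 => fun g =>
      Rintegral (@lebesgue_measure R) setT
        (fun t : R => iint (fun y : 'rV[R]_n' =>
             g (row_mx (const_mx t : 'rV[R]_1) y : 'rV[R]_n'.+1)))
  end.

Definition intDelta (n d : nat) (u : 'I_d -> 'I_n -> int) (c : 'I_d -> int)
  (g : 'rV[R]_n -> R) : R :=
  iint (fun y => if `[< polytope u c y >] then g y else 0).

(* E_N(x,y) = prod_i ell_i(y)^(N ell_i(x)) e^(-N ell_i(y))   (0^0 = 1) *)
Definition EN (n d : nat) (u : 'I_d -> 'I_n -> int) (c : 'I_d -> int)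
  (N : nat) (x y : 'rV[R]_n) : R :=
  \prod_(i < d) (powR (ell u c i y) (N%:R * ell u c i x)
                 * expR (- (N%:R * ell u c i y))).

Definition KN (n d : nat) (u : 'I_d -> 'I_n -> int) (c : 'I_d -> int)
  (N : nat) (x y : 'rV[R]_n) : R :=
  EN u c N x y / intDelta u c (EN u c N x).

Definition iterD (n : nat) (s : seq 'I_n) (f : 'rV[R]_n -> R) : 'rV[R]_n -> R :=
  foldr (fun j g => 'D_(delta_mx ord0 j : 'rV[R]_n) g) f s.

Definition smooth (n : nat) (f : 'rV[R]_n -> R) : Prop :=
  forall (s : seq 'I_n) (x : 'rV[R]_n), differentiable (iterD s f) x.

Definition diffop_le (n : nat) (m : nat)
  (Q : ('rV[R]_n -> R) -> ('rV[R]_n -> R)) : Prop :=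
  exists (L : seq (seq 'I_n)) (a : seq 'I_n -> 'rV[R]_n -> R),
    all (fun s => size s <= m)%N L /\
    forall f, smooth f -> forall x, Q f x = \sum_(s <- L) a s x * iterD s f x.

Definition asymp (a : nat -> R) (cf : nat -> R) : Prop :=
  forall M : nat, exists C : R, exists N0 : nat, forall N : nat,
    (0 < N)%N -> (N0 <= N)%N ->
    `|a N - \sum_(i < M) cf i / (N%:R ^+ i)| <= C / (N%:R ^+ M).

End Toric.

From HB Require Import structures.
From mathcomp Require Import all_boot all_order all_algebra.
From mathcomp Require Import all_classical all_reals all_analysis.
Set Implicit Arguments. Unset Strict Implicit. Unset Printing Implicit Defensive.
Import Order.TTheory GRing.Theory Num.Theory.
Import numFieldNormedType.Exports.
Local Open Scope classical_set_scope.
Local Open Scope ring_scope.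

(* Since <s_{Nk}, s_{Nk}> = Phi^* K_N(k, .) and Phi_* nu is Lebesgue measure on
   Delta, the integral of Phi^* f against mu_{Nk} is the integral over Delta of
   K_N(k, y) f(y) dy, whose expansion at x = k is the one defining the P_i.
   The pushforward hypothesis only applies to integrands continuous on Delta;
   K_N(k, .) is, but [powR] returns the junk value 1 at negative bases, so we
   pass through the extension obtained by clamping each ell_i at 0, which is
   continuous on all of R^n and agrees with K_N(k, .) on Delta. *)

Lemma continuous_powR_max0 (R : realType) (p : R) : 0 <= p ->
  continuous (fun y : R => Num.max y 0 `^ p).
Proof.
rewrite le_eqVlt => /predU1P[<-|p0].
  by under eq_fun do rewrite powRr0; move=> x; exact: cvg_cst.
have zero_left (y : R) : y < 0 -> Num.max y 0 `^ p = 0.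
  by move=> y0; rewrite max_r ?ltW // powR0 // gt_eqF.
have id_right (y : R) : 0 < y -> Num.max y 0 `^ p = y `^ p.
  by move=> y0; rewrite max_l ?ltW.
move=> x; have [x0|x0|->] := ltgtP x 0.
- rewrite /continuous_at zero_left //.
  have E : {near x, (fun _ => 0 : R) =1 (fun y => Num.max y 0 `^ p)}.
    by near=> y; rewrite zero_left //; near: y; exact: lt_nbhsl.
  by apply: cvg_trans (near_eq_cvg E) _; exact: cvg_cst.
- have E : {near x, (fun y => y `^ p) =1 (fun y => Num.max y 0 `^ p)}.
    by near=> y; rewrite id_right //; near: y; exact: lt_nbhsr.
  rewrite /continuous_at id_right //; apply: cvg_trans (near_eq_cvg E) _.
  have /derivable1_diffP/differentiable_continuous : derivable (fun y : R => y `^ p) x 1.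
    by apply: derivable_powR; rewrite in_itv /= x0.
  exact.
- apply/left_right_continuousP; rewrite /= maxxx powR0 ?gt_eqF //; split.
  + have E : {near 0^'-, (fun _ => 0 : R) =1 (fun y => Num.max y 0 `^ p)}.
      by near=> y; rewrite zero_left //; near: y; exact: nbhs_left_lt.
    by apply: cvg_trans (near_eq_cvg E) _; exact: cvg_cst.
  + have E : {near 0^'+, (fun y => y `^ p) =1 (fun y => Num.max y 0 `^ p)}.
      by near=> y; rewrite id_right //; near: y; exact: nbhs_right_gt.
    by apply: cvg_trans (near_eq_cvg E) _; exact: powR_cvg0.
Unshelve. all: by end_near. Qed.

Section PolytopeIntegrals.
Variables (R : realType) (n d : nat) (u : 'I_d -> 'I_n -> int) (c : 'I_d -> int).

Local Notation Delta := (polytope (R:=R) u c).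

Lemma continuous_ell (i : 'I_d) : continuous (ell (R:=R) u c i).
Proof.
have term_cont j : continuous (fun z : 'rV[R]_n => (u i j)%:~R * z ord0 j).
  by move=> z; apply: (@cvgM _ _ (nbhs z)); [exact: cvg_cst | exact: coord_continuous].
have sum_cont : continuous (fun z : 'rV[R]_n => \sum_(j < n) (u i j)%:~R * z ord0 j).
  exact: (@continuous_big R _ +%R 0 xpredT add_continuous).
by move=> y; apply: (@cvgB _ _ _ (nbhs y)); [exact: cvg_cst | exact: sum_cont].
Qed.

Lemma intDelta_eq_on (g h : 'rV[R]_n -> R) :
  {in Delta, g =1 h} -> intDelta u c g = intDelta u c h.
Proof.
move=> gh; rewrite /intDelta; congr iint; apply/funext => y.
by case: asboolP => // Dy; apply: gh; rewrite inE.
Qed.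

Definition EN_clamped (N : nat) (x y : 'rV[R]_n) : R :=
  \prod_(i < d) (Num.max (ell u c i y) 0 `^ (N%:R * ell u c i x)
                 * expR (- (N%:R * ell u c i y))).

Lemma EN_clampedE (N : nat) (x : 'rV[R]_n) :
  {in Delta, EN_clamped N x =1 EN u c N x}.
Proof.
move=> y; rewrite inE => Dy; apply: eq_bigr => i _.
by rewrite max_l //; exact: Dy.
Qed.

Lemma continuous_EN_clamped (N : nat) (x : 'rV[R]_n) :
  Delta x -> continuous (EN_clamped N x).
Proof.
move=> Dx; apply: (@continuous_big R _ *%R 1 xpredT mul_continuous) => i _ y.
have comp_ell (g : R -> R) : continuous g -> continuous (g \o ell u c i).
  by move=> gc z; apply: continuous_comp; [exact: continuous_ell | exact: gc].
have p_ge0 : 0 <= N%:R * ell u c i x by apply: mulr_ge0 => //; exact: Dx.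
have exp_cont : continuous (fun t : R => expR (- (N%:R * t))).
  move=> t; have lin : {for t, continuous (fun t : R => - (N%:R * t))}.
    by apply: cvgN; apply: cvgM; [exact: cvg_cst | exact: cvg_id].
  exact: (continuous_comp lin (@continuous_expR R _)).
apply: (@cvgM _ _ (nbhs y)).
- exact: (comp_ell _ (continuous_powR_max0 p_ge0) y).
- exact: (comp_ell _ exp_cont y).
Qed.

Variables (dX : measure_display) (X : measurableType dX).
Variables (nu : {measure set X -> \bar R}) (Phi : X -> 'rV[R]_n).
Hypothesis Phi_Delta : Phi @` setT = Delta.
Hypothesis Phi_push : forall g : 'rV[R]_n -> R,
  {within Delta, continuous g} ->
  Rintegral nu setT (fun p => g (Phi p)) = intDelta u c g.

Lemma Rintegral_pushforward_KN (N : nat) (x : 'rV[R]_n) (f : 'rV[R]_n -> R) :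
  Delta x -> continuous f ->
  Rintegral nu setT (fun p => f (Phi p) * KN u c N x (Phi p)) =
  intDelta u c (fun y => KN u c N x y * f y).
Proof.
move=> Dx fc; pose Z := intDelta u c (EN u c N x).
pose g y := EN_clamped N x y / Z * f y.
have gc : continuous g.
  move=> y; apply: (@cvgM _ _ (nbhs y)) (fc y).
  by apply: (@cvgM _ _ (nbhs y)); [exact: continuous_EN_clamped | exact: cvg_cst].
have gE : {in Delta, forall y, g y = KN u c N x y * f y}.
  by move=> y Dy; rewrite /g /KN EN_clampedE.
transitivity (Rintegral nu setT (fun p => g (Phi p))).
  apply: eq_Rintegral => p _; rewrite mulrC gE // inE -Phi_Delta.
  by exists p.
by rewrite Phi_push; [exact: intDelta_eq_on | exact: continuous_subspaceT].
Qed.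

End PolytopeIntegrals.

Theorem mainTheorem2 (R : realType) (n d : nat)
  (u : 'I_d -> 'I_n -> int) (c : 'I_d -> int)
  (hDelzant : Delzant R u c)
  (* the toric manifold X, seen as a measure space with Liouville measure nu *)
  (dX : measure_display) (X : measurableType dX)
  (nu : {measure set X -> \bar R})
  (* moment map, with Phi(X) = Delta and Phi_* nu = Lebesgue measure on Delta *)
  (Phi : X -> 'rV[R]_n)
  (hPhiImage : Phi @` setT = polytope (R:=R) u c)
  (hPhiPush : forall g : 'rV[R]_n -> R,
      {within polytope (R:=R) u c, continuous g} ->
      nu.-integrable setT (fun p => (g (Phi p))%:E) /\
      Rintegral nu setT (fun p => g (Phi p)) = intDelta u c g)
  (* rho N k = <s_{Nk}, s_{Nk}> for the unit section of weight Nk of L^N *)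
  (rho : nat -> 'rV[int]_n -> X -> R)
  (hrho : forall (N : nat) (k : 'rV[int]_n), (0 < N)%N ->
      polytope (R:=R) u c (map_mx (fun z : int => z%:~R) k) ->
      forall p, rho N k p =
        EN u c N (map_mx (fun z : int => z%:~R) k) (Phi p)
        / intDelta u c (EN u c N (map_mx (fun z : int => z%:~R) k)))
  (* the operators P_i of the context *)
  (P : nat -> ('rV[R]_n -> R) -> ('rV[R]_n -> R))
  (hP0 : forall f, smooth f -> forall x, P 0%N f x = f x)
  (hPord : forall i, diffop_le (2 * i) (P i))
  (hPchar : forall f, smooth f -> forall x, polytope (R:=R) u c x ->
      asymp (fun N => intDelta u c (fun y => KN u c N x y * f y))
            (fun i => P i f x)) :
  forall (k : 'rV[int]_n), polytope (R:=R) u c (map_mx (fun z : int => z%:~R) k) ->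
  forall f : 'rV[R]_n -> R, smooth f ->
    asymp (fun N => Rintegral nu setT (fun p => f (Phi p) * rho N k p))
          (fun i => P i f (map_mx (fun z : int => z%:~R) k)).
Proof.
move=> k hk f hf; set x := map_mx (fun z : int => z%:~R) k.
have fc : continuous f by move=> y; exact: differentiable_continuous (hf [::] y).
have push g gc := (hPhiPush g gc).2.
move=> M; have [C [N0 expansion]] := hPchar f hf x hk M.
exists C, N0 => N N_gt0 N0_le_N.
have rhoE : Rintegral nu setT (fun p => f (Phi p) * rho N k p) =
            Rintegral nu setT (fun p => f (Phi p) * KN u c N x (Phi p)).
  by apply: eq_Rintegral => p _; rewrite hrho.
by rewrite rhoE (Rintegral_pushforward_KN hPhiImage push N hk fc); exact: expansion.
Qed.
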